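(* Let $A\overset{i}{\to}U\overset{j}{\to}G$ and $A\overset{i'}{\to}U'\overset{j'}{\to}G$ be extensions of a semilattice of groups $A$ by a group $G$, and let $\pi:U\to S$, $\kappa:S\to G$ and $\pi':U'\to S'$, $\kappa':S'\to G$ be epimorphisms onto inverse semigroups such that $A\overset{i}{\to}U\overset{\pi}{\to}S$ and $A\overset{i'}{\to}U'\overset{\pi'}{\to}S'$ are extensions of $A$ by $S$ and by $S'$ respectively, $j=\kappa\circ\pi$ and $j'=\kappa'\circ\pi'$. Given a homomorphism $\mu:U\to U'$ with $\mu\circ i=i'$ and $j'\circ\mu=j$, there exists a homomorphism $\nu:S\to S'$ such that $\nu\circ\pi=\pi'\circ\mu$ and $\kappa'\circ\nu=\kappa$. Moreover, if $\mu$ is injective then $\nu$ is injective, and if $\mu$ is surjective then $\nu$ is surjective.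
   Context: A semilattice of groups is an inverse semigroup whose idempotents are central. An extension of $A$ by a group $G$ is an inverse semigroup $U$ with a monomorphism $i:A\to U$ and an epimorphism $j:U\to G$ with $i(A)=j^{-1}(1)$. An extension of $A$ by an inverse semigroup $S$ is an inverse semigroup $U$ with a monomorphism $i:A\to U$ and an idempotent-separating epimorphism $\pi:U\to S$ with $i(A)=\pi^{-1}(E(S))$. *)

Record InvSemigroup := {
  isg_car :> Type;
  isg_mul : isg_car -> isg_car -> isg_car;
  isg_assoc : forall x y z, isg_mul x (isg_mul y z) = isg_mul (isg_mul x y) z;
  isg_unique_inverse : forall x, exists! y,
      isg_mul (isg_mul x y) x = x /\ isg_mul (isg_mul y x) y = y
}.

Arguments isg_mul {i} _ _.

Record Group := {
  grp_isg :> InvSemigroup;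
  grp_one : grp_isg;
  grp_inv : grp_isg -> grp_isg;
  grp_mul1g : forall x, isg_mul grp_one x = x;
  grp_mulg1 : forall x, isg_mul x grp_one = x;
  grp_mulVg : forall x, isg_mul (grp_inv x) x = grp_one;
  grp_mulgV : forall x, isg_mul x (grp_inv x) = grp_one
}.

Definition idempotent {S : InvSemigroup} (x : S) : Prop := isg_mul x x = x.

Definition semilattice_of_groups (S : InvSemigroup) : Prop :=
  forall e x : S, idempotent e -> isg_mul e x = isg_mul x e.

Definition is_hom {S T : InvSemigroup} (f : S -> T) : Prop :=
  forall x y : S, f (isg_mul x y) = isg_mul (f x) (f y).

Definition injective_map {X Y : Type} (f : X -> Y) : Prop :=
  forall x y, f x = f y -> x = y.

Definition surjective_map {X Y : Type} (f : X -> Y) : Prop :=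
  forall y, exists x, f x = y.

Definition monomorphism {S T : InvSemigroup} (f : S -> T) : Prop :=
  is_hom f /\ injective_map f.

Definition epimorphism {S T : InvSemigroup} (f : S -> T) : Prop :=
  is_hom f /\ surjective_map f.

Definition idempotent_separating {S T : InvSemigroup} (f : S -> T) : Prop :=
  forall e e' : S, idempotent e -> idempotent e' -> f e = f e' -> e = e'.

Definition group_extension {A U : InvSemigroup} {G : Group}
    (i : A -> U) (j : U -> G) : Prop :=
  monomorphism i /\ epimorphism j /\
  (forall u : U, (exists a, i a = u) <-> j u = grp_one G).

Definition isg_extension {A U S : InvSemigroup}
    (i : A -> U) (pi : U -> S) : Prop :=
  monomorphism i /\ epimorphism pi /\ idempotent_separating pi /\
  (forall u : U, (exists a, i a = u) <-> idempotent (pi u)).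

(* Two elements of U have the same image in S exactly when they have the same
   range idempotent u u^-1 and each of u1^-1 u2, u2^-1 u1 lies in i(A): the
   idempotent-separating hypothesis gives the first condition, the kernel
   condition i(A) = pi^-1(E(S)) the second, and commuting idempotents of S give
   the converse.  Since mu preserves inverses and maps i(A) into i'(A), it
   preserves this relation, so pi' o mu factors through pi; when mu is
   injective it also reflects the relation, which makes the factor injective. *)

From Stdlib Require Import ClassicalEpsilon.

Notation "x ** y" := (isg_mul x y) (at level 40, left associativity).

Section InverseSemigroup.

Variable S : InvSemigroup.

Definition inv (x : S) : S :=
  proj1_sig (constructive_indefinite_description _ (isg_unique_inverse S x)).

Lemma inv_spec (x : S) :
  (x ** inv x ** x = x /\ inv x ** x ** inv x = inv x) /\
  (forall y, x ** y ** x = x /\ y ** x ** y = y -> inv x = y).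
Proof.
  unfold inv. destruct (constructive_indefinite_description _ _) as [y [Hy Huniq]].
  split; [exact Hy | intros z Hz; exact (Huniq z Hz)].
Qed.

Lemma mul_inv_mul (x : S) : x ** inv x ** x = x.
Proof. apply (inv_spec x). Qed.

Lemma inv_mul_inv (x : S) : inv x ** x ** inv x = inv x.
Proof. apply (inv_spec x). Qed.

Lemma inv_unique (x y : S) : x ** y ** x = x -> y ** x ** y = y -> inv x = y.
Proof. intros; apply (inv_spec x); auto. Qed.

Lemma inv_idem (e : S) : idempotent e -> inv e = e.
Proof. unfold idempotent; intro He. apply inv_unique; rewrite !He; reflexivity. Qed.

Lemma idem_mul_inv (x : S) : idempotent (x ** inv x).
Proof. unfold idempotent. rewrite isg_assoc, mul_inv_mul. reflexivity. Qed.

Lemma idem_inv_mul (x : S) : idempotent (inv x ** x).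
Proof. unfold idempotent. rewrite isg_assoc, inv_mul_inv. reflexivity. Qed.

(* The inverse x of e f is f x e, hence idempotent, and then e f = inv x = x. *)
Lemma idem_mul (e f : S) : idempotent e -> idempotent f -> idempotent (e ** f).
Proof.
  unfold idempotent; intros He Hf.
  set (x := inv (e ** f)).
  assert (Hx1 : e ** f ** x ** (e ** f) = e ** f) by apply mul_inv_mul.
  assert (Hx2 : x ** (e ** f) ** x = x) by apply inv_mul_inv.
  assert (Hx : x = f ** x ** e).
  { apply inv_unique.
    - transitivity (e ** (f ** f) ** x ** (e ** e) ** f); [rewrite !isg_assoc; reflexivity|].
      rewrite He, Hf. rewrite <- Hx1 at 2. rewrite !isg_assoc; reflexivity.
    - transitivity (f ** (x ** (e ** f) ** x) ** e); [|rewrite Hx2; reflexivity].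
      transitivity (f ** x ** (e ** e) ** (f ** f) ** x ** e); [rewrite !isg_assoc; reflexivity|].
      rewrite He, Hf, !isg_assoc; reflexivity. }
  assert (Hxx : x ** x = x).
  { rewrite Hx at 1 2. transitivity (f ** (x ** (e ** f) ** x) ** e).
    - rewrite !isg_assoc; reflexivity.
    - rewrite Hx2, <- Hx. reflexivity. }
  assert (Hinvx : inv x = e ** f) by (apply inv_unique; assumption).
  rewrite inv_idem in Hinvx by exact Hxx. rewrite <- Hinvx. exact Hxx.
Qed.

Lemma idem_comm (e f : S) : idempotent e -> idempotent f -> e ** f = f ** e.
Proof.
  intros He Hf.
  assert (Hef := idem_mul e f He Hf). assert (Hfe := idem_mul f e Hf He).
  unfold idempotent in *.
  rewrite <- (inv_idem (e ** f)) by exact Hef.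
  apply inv_unique.
  - transitivity (e ** (f ** f) ** (e ** e) ** f); [rewrite !isg_assoc; reflexivity|].
    rewrite He, Hf. transitivity (e ** f ** (e ** f)); [rewrite !isg_assoc; reflexivity | exact Hef].
  - transitivity (f ** (e ** e) ** (f ** f) ** e); [rewrite !isg_assoc; reflexivity|].
    rewrite He, Hf. transitivity (f ** e ** (f ** e)); [rewrite !isg_assoc; reflexivity | exact Hfe].
Qed.

End InverseSemigroup.

Arguments inv {S} x.

Lemma hom_inv {S T : InvSemigroup} (f : S -> T) (x : S) :
  is_hom f -> f (inv x) = inv (f x).
Proof.
  intro Hf. symmetry.
  apply inv_unique; rewrite <- !Hf; [rewrite mul_inv_mul | rewrite inv_mul_inv]; reflexivity.
Qed.

Lemma hom_eq_of_range_idem {U S : InvSemigroup} (p : U -> S) (u1 u2 : U) :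
  is_hom p -> u1 ** inv u1 = u2 ** inv u2 ->
  idempotent (p (inv u1 ** u2)) -> idempotent (p (inv u2 ** u1)) ->
  p u1 = p u2.
Proof.
  intros Hp E Hf Hf'.
  set (f := p (inv u1 ** u2)) in *. set (f' := p (inv u2 ** u1)) in *.
  assert (Hu2 : p u2 = p u1 ** f).
  { unfold f. rewrite <- Hp, isg_assoc, E, mul_inv_mul. reflexivity. }
  assert (Hu1 : p u1 = p u2 ** f').
  { unfold f'. rewrite <- Hp, isg_assoc, <- E, mul_inv_mul. reflexivity. }
  assert (Hu1f' : p u1 ** f' = p u1).
  { rewrite Hu1 at 1. rewrite <- isg_assoc, Hf'. symmetry; exact Hu1. }
  rewrite Hu1 at 1. rewrite Hu2, <- isg_assoc, (idem_comm S f f' Hf Hf'), isg_assoc, Hu1f'.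
  reflexivity.
Qed.

Definition in_image {X Y : Type} (f : X -> Y) (y : Y) : Prop := exists x, f x = y.

Definition ext_related {A U : InvSemigroup} (i : A -> U) (u1 u2 : U) : Prop :=
  u1 ** inv u1 = u2 ** inv u2 /\ in_image i (inv u1 ** u2) /\ in_image i (inv u2 ** u1).

Lemma isg_extension_eq_iff {A U S : InvSemigroup} (i : A -> U) (pi : U -> S) (u1 u2 : U) :
  isg_extension i pi -> pi u1 = pi u2 <-> ext_related i u1 u2.
Proof.
  intros [_ [[Hpi _] [Hsep Hker]]].
  assert (Hdiv : forall v1 v2, pi v1 = pi v2 -> in_image i (inv v1 ** v2)).
  { intros v1 v2 E. apply Hker. rewrite Hpi, hom_inv, E by exact Hpi. apply idem_inv_mul. }
  split.
  - intro E. split; [|split; apply Hdiv; [exact E | symmetry; exact E]].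
    apply Hsep; try apply idem_mul_inv.
    rewrite !Hpi, (hom_inv pi u1), (hom_inv pi u2), E by exact Hpi. reflexivity.
  - intros [E [H12 H21]].
    apply hom_eq_of_range_idem; [exact Hpi | exact E | apply Hker; exact H12 | apply Hker; exact H21].
Qed.

Section ExtensionMorphism.

Variables (A U U' : InvSemigroup) (i : A -> U) (i' : A -> U') (mu : U -> U').
Hypotheses (Hmu : is_hom mu) (Hmui : forall a, mu (i a) = i' a).

Lemma in_image_hom (u : U) : in_image i u -> in_image i' (mu u).
Proof. intros [a <-]. exists a. symmetry; apply Hmui. Qed.

Lemma ext_related_hom (u1 u2 : U) : ext_related i u1 u2 -> ext_related i' (mu u1) (mu u2).
Proof.
  intros [E [H12 H21]].
  split; [|split]; rewrite <- ?hom_inv, <- ?Hmu by exact Hmu.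
  - rewrite E. reflexivity.
  - apply in_image_hom; exact H12.
  - apply in_image_hom; exact H21.
Qed.

Hypothesis Hmu_inj : injective_map mu.

Lemma in_image_inj (u : U) : in_image i' (mu u) -> in_image i u.
Proof. intros [a Ha]. exists a. apply Hmu_inj. rewrite Hmui. exact Ha. Qed.

Lemma ext_related_inj (u1 u2 : U) : ext_related i' (mu u1) (mu u2) -> ext_related i u1 u2.
Proof.
  intros [E [H12 H21]]. rewrite <- !hom_inv, <- !Hmu in * by exact Hmu.
  split; [|split].
  - apply Hmu_inj; exact E.
  - apply in_image_inj; exact H12.
  - apply in_image_inj; exact H21.
Qed.

End ExtensionMorphism.

Lemma factor_through_surjection {X Y Z : Type} (p : X -> Y) (f : X -> Z) :
  surjective_map p -> (forall x1 x2, p x1 = p x2 -> f x1 = f x2) ->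
  exists g : Y -> Z, forall x, g (p x) = f x.
Proof.
  intros Hp Hf.
  exists (fun y => f (proj1_sig (constructive_indefinite_description _ (Hp y)))).
  intro x. destruct (constructive_indefinite_description _ _) as [x' Hx']. simpl.
  apply Hf; exact Hx'.
Qed.

Section Factor.

Variables (X Y Z : Type) (p : X -> Y) (f : X -> Z) (g : Y -> Z).
Hypotheses (Hp : surjective_map p) (Hg : forall x, g (p x) = f x).

Lemma factor_injective :
  (forall x1 x2, f x1 = f x2 -> p x1 = p x2) -> injective_map g.
Proof.
  intros Hf y1 y2. destruct (Hp y1) as [x1 <-], (Hp y2) as [x2 <-].
  rewrite !Hg. apply Hf.
Qed.

Lemma factor_surjective : surjective_map f -> surjective_map g.
Proof. intros Hf z. destruct (Hf z) as [x <-]. exists (p x). apply Hg. Qed.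

End Factor.

Lemma factor_is_hom {U S T : InvSemigroup} (p : U -> S) (f : U -> T) (g : S -> T) :
  epimorphism p -> is_hom f -> (forall u, g (p u) = f u) -> is_hom g.
Proof.
  intros [Hp Hsurj] Hf Hg s1 s2.
  destruct (Hsurj s1) as [u1 <-], (Hsurj s2) as [u2 <-].
  rewrite <- Hp, !Hg. apply Hf.
Qed.

Theorem proposition4p6
  (A U U' S S' : InvSemigroup) (G : Group)
  (i : A -> U) (j : U -> G) (i' : A -> U') (j' : U' -> G)
  (pi : U -> S) (kappa : S -> G) (pi' : U' -> S') (kappa' : S' -> G)
  (mu : U -> U')
  (hA : semilattice_of_groups A)
  (hext : group_extension i j) (hext' : group_extension i' j')
  (hpi : epimorphism pi) (hkappa : epimorphism kappa)
  (hpi' : epimorphism pi') (hkappa' : epimorphism kappa')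
  (hS : isg_extension i pi) (hS' : isg_extension i' pi')
  (hj : forall u, j u = kappa (pi u)) (hj' : forall u, j' u = kappa' (pi' u))
  (hmu : is_hom mu) (hmui : forall a, mu (i a) = i' a)
  (hmuj : forall u, j' (mu u) = j u) :
  exists nu : S -> S',
    is_hom nu /\
    (forall u, nu (pi u) = pi' (mu u)) /\
    (forall s, kappa' (nu s) = kappa s) /\
    (injective_map mu -> injective_map nu) /\
    (surjective_map mu -> surjective_map nu).
Proof.
  assert (Hcompat : forall u1 u2, pi u1 = pi u2 -> pi' (mu u1) = pi' (mu u2)).
  { intros u1 u2. rewrite (isg_extension_eq_iff i pi), (isg_extension_eq_iff i' pi') by assumption.
    apply ext_related_hom; assumption. }
  destruct (factor_through_surjection pi (fun u => pi' (mu u)) (proj2 hpi) Hcompat) as [nu Hnu].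
  exists nu. split; [|split; [exact Hnu | split; [|split]]].
  - apply (factor_is_hom pi (fun u => pi' (mu u))); [exact hpi | | exact Hnu].
    intros u1 u2. rewrite hmu. apply (proj1 hpi').
  - intro s. destruct (proj2 hpi s) as [u <-]. rewrite Hnu, <- hj', hmuj, hj. reflexivity.
  - intro Hinj. apply (factor_injective _ _ _ pi (fun u => pi' (mu u))); [exact (proj2 hpi) | exact Hnu |].
    intros u1 u2. rewrite (isg_extension_eq_iff i pi), (isg_extension_eq_iff i' pi') by assumption.
    apply ext_related_inj; assumption.
  - intros Hsurj. apply (factor_surjective _ _ _ pi (fun u => pi' (mu u))); [exact Hnu |].
    intro s'. destruct (proj2 hpi' s') as [u' <-], (Hsurj u') as [u <-]. exists u. reflexivity.
Qed.
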